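(* The problem of computing the core number of a fixed designated vertex $v$ (on incremental graph streams) admits an extendable bitwise AND gadget with $v(d)=O(d^2)$ and $t(d)=O(d^4)$.
   Context: The core number of a vertex $v$ in $G$ is the largest $k$ such that $v$ belongs to a subgraph of $G$ with minimum degree at least $k$. Let $\zeta\in\mathbb N$ be a fixed constant and $m=\zeta d$. An extendable bitwise AND gadget for a graph function $g$ (here real-valued: the core number of the designated vertex $v$, which is a vertex of the gadget graph) consists of positive increasing functions $v,t:\mathbb N\to\mathbb N$ and, for each $d$: an initial graph $H_{\mathrm{init}}=(V,E_0)$ with $|V|=v(d)$; edges $e_1,\dots,e_d\in\binom V2$, defining $H^1_x=H_{\mathrm{init}}\cup\{e_i: x_i=1\}$ for $x\in\{0,1\}^d$; and for every sequence of queries $q^1,\dots,q^m\in\{0,1\}^d$, edge sets $S^1,T^1,\dots,S^m,T^m$ and functions $\mathrm{dec}_j:\mathrm{Range}(g)\to\mathbb R$ (depending on the queries but not on $x$) such that: (a) each $\mathrm{dec}_j$ is $1$-Lipschitz; (b) with $Q^j_x=H^j_x\cup S^j$, $\mathrm{dec}_j(g(Q^j_x))-\mathrm{dec}_j(g(H^j_x))=\langle x,q^j\rangle$ for all $x$; (c) $H^{j+1}_x=Q^j_x\cup T^j$; and the total number of edge insertions $|E_0|+d+\sum_j(|S^j|+|T^j|)$ is at most $t(d)$. For real-valued $g$ one may take $\mathrm{dec}_j=\mathrm{id}$. *)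

From Stdlib Require Import Reals.
From mathcomp Require Import all_boot.

Set Implicit Arguments.
Unset Strict Implicit.
Unset Printing Implicit Defensive.

Definition edge_set (n : nat) (E : {set {set 'I_n}}) : Prop :=
  forall e, e \in E -> #|e| = 2.

Definition deg_in (n : nat) (E : {set {set 'I_n}}) (U : {set 'I_n}) (x : 'I_n) : nat :=
  #|[set y in U | [set x; y] \in E]|.

(* minimum degree of the induced subgraph on U (U nonempty; default n is an
   upper bound for any degree, so it is neutral) *)
Definition min_deg (n : nat) (E : {set {set 'I_n}}) (U : {set 'I_n}) : nat :=
  \big[minn/n]_(x in U) deg_in E U x.

(* core number of v: largest k such that v lies in a subgraph of minimum degree
   at least k (it suffices to consider induced subgraphs). *)
Definition core_number (n : nat) (E : {set {set 'I_n}}) (v : 'I_n) : nat :=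
  \max_(U : {set 'I_n} | v \in U) min_deg E U.

Definition inner (d : nat) (x q : {ffun 'I_d -> bool}) : nat :=
  \sum_(i < d) ((x i && q i) : nat).

(* The graph H^{j+1}_x (0-indexed: stage j here is stage j+1 of the paper). *)
Fixpoint Hgraph (n d : nat) (E0 : {set {set 'I_n}}) (e : 'I_d -> {set 'I_n})
  (Sx Tx : nat -> {set {set 'I_n}}) (x : {ffun 'I_d -> bool}) (j : nat)
  : {set {set 'I_n}} :=
  match j with
  | 0 => E0 :|: [set e i | i in [pred i | x i]]
  | j'.+1 => Hgraph E0 e Sx Tx x j' :|: Sx j' :|: Tx j'
  end.

Definition Qgraph (n d : nat) (E0 : {set {set 'I_n}}) (e : 'I_d -> {set 'I_n})
  (Sx Tx : nat -> {set {set 'I_n}}) (x : {ffun 'I_d -> bool}) (j : nat)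
  : {set {set 'I_n}} :=
  Hgraph E0 e Sx Tx x j :|: Sx j.

Definition pos_increasing (f : nat -> nat) : Prop :=
  (forall d, 0 < f d) /\ (forall d1 d2, d1 < d2 -> f d1 < f d2).

Definition bigO (f g : nat -> nat) : Prop :=
  exists C N : nat, forall d, N <= d -> f d <= C * g d.

Definition core_AND_gadget (zeta : nat) (vf tf : nat -> nat) : Prop :=
  pos_increasing vf /\ pos_increasing tf /\
  forall d : nat,
  exists (E0 : {set {set 'I_(vf d)}}) (vtx : 'I_(vf d)) (e : 'I_d -> {set 'I_(vf d)}),
    edge_set E0 /\ (forall i, #|e i| = 2) /\
    forall q : 'I_(zeta * d) -> {ffun 'I_d -> bool},
    exists (Sx Tx : nat -> {set {set 'I_(vf d)}}) (dec : nat -> nat -> R),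
      (forall j, j < zeta * d -> edge_set (Sx j) /\ edge_set (Tx j)) /\
      (forall j, j < zeta * d -> forall a b : nat,
          Rle (Rabs (Rminus (dec j a) (dec j b))) (Rabs (Rminus (INR a) (INR b)))) /\
      (forall (x : {ffun 'I_d -> bool}) (j : 'I_(zeta * d)),
          Rminus (dec j (core_number (Qgraph E0 e Sx Tx x j) vtx))
                 (dec j (core_number (Hgraph E0 e Sx Tx x j) vtx))
          = INR (inner x (q j))) /\
      #|E0| + d + \sum_(j < zeta * d) (#|Sx j| + #|Tx j|) <= tf d.

(* The gadget has a hub [v], leaves [u_1, ..., u_d] (the edge [e_i] is [v u_i]) and a
   clique [K] on [M] vertices; the hub starts out joined to the first [c_0 = d + 1]
   vertices of [K].  At stage [j] the hub sees the first [c_j = (d + 1)(j + 1)] vertices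
   of [K], while every leaf sees, besides the hub, at most the first [c_j - 1] of them.
   So a subgraph containing the hub either contains a leaf of degree at most [c_j] or
   gives the hub degree at most [c_j], and the clique shows that the core number of the
   hub is exactly [c_j].  The query edges [S^j] join each leaf with [q^j_i = 1] to the
   first [c_j + d] vertices of [K]; now precisely the leaves with [x_i q^j_i = 1] join
   the core of the hub, which rises to [c_j + <x, q^j>].  The edges [T^j] then lift the
   hub to [c_(j+1) = c_j + d + 1], above every leaf raised so far.  With
   [M = (d + 1)(zeta d + 1)] there are [n = O(d^2)] vertices and at most [3 n^2 = O(d^4)]
   insertions. *)

From Stdlib Require Import Reals.
From mathcomp Require Import all_boot all_order zify.
Set Implicit Arguments. Unset Strict Implicit. Unset Printing Implicit Defensive.
Import Order.TTheory.

Section CoreNumber.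
Variables (n : nat) (G : {set {set 'I_n}}).

Lemma min_deg_le (U : {set 'I_n}) y : y \in U -> min_deg G U <= deg_in G U y.
Proof. by move=> yU; rewrite /min_deg -minEnat -leEnat bigmin_le_cond. Qed.

Lemma deg_in_le_card (U N : {set 'I_n}) y :
  (forall z, z \in U -> [set y; z] \in G -> z \in N) -> deg_in G U y <= #|N|.
Proof.
move=> sub; apply: subset_leq_card; apply/subsetP => z.
by rewrite inE => /andP[zU yz]; apply: sub.
Qed.

Lemma card_le_deg_in (U N : {set 'I_n}) y :
  N \subset U -> (forall z, z \in N -> [set y; z] \in G) -> #|N| <= deg_in G U y.
Proof.
move=> NU adj; apply: subset_leq_card; apply/subsetP => z zN.
by rewrite inE (subsetP NU z zN) adj.
Qed.

Lemma core_number_le v k :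
  (forall U : {set 'I_n}, v \in U -> exists2 y, y \in U & deg_in G U y <= k) ->
  core_number G v <= k.
Proof.
move=> low; apply/bigmax_leqP => U vU.
by have [y yU] := low U vU; apply: leq_trans (min_deg_le yU).
Qed.

Lemma core_number_ge v (U : {set 'I_n}) k :
  v \in U -> (forall y, y \in U -> k <= deg_in G U y) -> k <= core_number G v.
Proof.
move=> vU high.
apply: leq_trans (leq_bigmax_cond (F := min_deg G) U vU).
rewrite /min_deg -minEnat -leEnat; apply: le_bigmin => [|y /high //].
rewrite leEnat; apply: leq_trans (high v vU) _.
by apply: leq_trans (max_card _) _; rewrite card_ord.
Qed.

End CoreNumber.

Section RelGraph.
Variable T : finType.

Lemma eq_set2 (a b x y : T) :
  [set a; b] = [set x; y] -> (a = x /\ b = y) \/ (a = y /\ b = x).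
Proof.
move=> E.
have bxy : b \in [set x; y] by rewrite -E set22.
have /set2P[ax|ay] : a \in [set x; y] by rewrite -E set21.
- subst a; have /set2P[yx|->] : y \in [set x; b] by rewrite E set22.
    by subst y; left; case/set2P: bxy.
  by left.
- subst a; have /set2P[xy|->] : x \in [set y; b] by rewrite E set21.
    by subst x; right; case/set2P: bxy.
  by right.
Qed.

Definition rel_graph (r : rel T) : {set {set T}} :=
  [set f | [exists a, exists b, [&& a != b, r a b & f == [set a; b]]]].

Lemma rel_graphP (r : rel T) f :
  reflect (exists a b, [/\ a != b, r a b & f = [set a; b]]) (f \in rel_graph r).
Proof.
rewrite inE; apply: (iffP existsP) => [[a /existsP[b /and3P[ab rab /eqP ->]]]|].
  by exists a, b.
by move=> [a [b [ab rab ->]]]; exists a; apply/existsP; exists b; rewrite ab rab eqxx.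
Qed.

Lemma mem_rel_graph (r : rel T) a b : a != b -> r a b -> [set a; b] \in rel_graph r.
Proof. by move=> ab rab; apply/rel_graphP; exists a, b. Qed.

Lemma rel_graph_set2 (r : rel T) a b : [set a; b] \in rel_graph r -> r a b || r b a.
Proof.
by move=> /rel_graphP[a' [b' [_ rab /eq_set2[][-> ->]]]]; rewrite rab ?orbT.
Qed.

Lemma card_rel_graph_edge (r : rel T) f : f \in rel_graph r -> #|f| = 2.
Proof. by move=> /rel_graphP[a [b [ab _ ->]]]; rewrite cards2 ab. Qed.

Lemma card_rel_graph (r : rel T) (A B : {set T}) :
  (forall a b, r a b -> (a \in A) && (b \in B)) -> #|rel_graph r| <= #|A| * #|B|.
Proof.
move=> rAB; rewrite -cardsX.
apply: leq_trans (leq_imset_card (fun p => [set p.1; p.2]) _).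
apply: subset_leq_card; apply/subsetP => f /rel_graphP[a [b [_ rab ->]]].
by apply/imsetP; exists (a, b); rewrite // inE /= rAB.
Qed.

End RelGraph.

Lemma edge_set_rel_graph n (r : rel 'I_n) : edge_set (rel_graph r).
Proof. by move=> f; apply: card_rel_graph_edge. Qed.

Section Gadget.
Variables d M : nat.
Local Notation n := (d + M).+1.

(* Vertex [0] is the hub, [i + 1] is the leaf [u_i], and the vertices above [d] form the
   clique [K], of which [kfirst c] are the first [c]. *)
Definition hub : 'I_n := ord0.
Definition leaf (i : 'I_d) : 'I_n := inord i.+1.
Definition kfirst c : {set 'I_n} := [set z : 'I_n | d < z < d.+1 + c].

Lemma leafE i : val (leaf i) = i.+1.
Proof. by rewrite /leaf /= inordK //; have := ltn_ord i; lia. Qed.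

Lemma leaf_inj : injective leaf.
Proof. by move=> i j /(congr1 val); rewrite !leafE => [[]] /val_inj. Qed.

Lemma hub_leaf i : (hub == leaf i) = false.
Proof. by apply/negbTE/eqP => /(congr1 val); rewrite leafE. Qed.

Lemma leaf_hub i : (leaf i == hub) = false.
Proof. by rewrite eq_sym hub_leaf. Qed.

Lemma d_lt_leaf i : (d < leaf i) = false.
Proof. by rewrite leafE; have := ltn_ord i; lia. Qed.

Lemma hub_kfirst c : (hub \in kfirst c) = false.
Proof. by rewrite inE. Qed.

Lemma leaf_kfirst c i : (leaf i \in kfirst c) = false.
Proof. by rewrite inE d_lt_leaf. Qed.

Lemma card_kfirst c : c <= M -> #|kfirst c| = c.
Proof.
move=> cM; have -> : kfirst c = [set inord (d.+1 + t) | t : 'I_c].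
  apply/setP => z; rewrite inE; apply/idP/imsetP => [/andP[dz zc]|[t _ ->]].
    have tc : z - d.+1 < c by lia.
    by exists (Ordinal tc) => //; apply: val_inj; rewrite /= inordK; lia.
  by have tc := ltn_ord t; rewrite inordK; lia.
rewrite card_imset ?card_ord // => t1 t2 /(congr1 val) /=.
have t1c := ltn_ord t1; have t2c := ltn_ord t2.
by rewrite !inordK => [e||]; [apply: val_inj => /=; lia|lia|lia].
Qed.

Section HubCore.
Variables (G : {set {set 'I_n}}) (c : nat) (P W : {pred 'I_d}).
Hypotheses (c_gt0 : 0 < c) (cdM : c + d < M).
Hypothesis clique : forall a b : 'I_n, d < a -> d < b -> a != b -> [set a; b] \in G.
Hypothesis hub_adj : forall y, y \in kfirst c -> [set hub; y] \in G.
Hypothesis hub_leafP : forall i, P i -> [set hub; leaf i] \in G.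
Hypothesis leafP_adj :
  forall i, P i -> forall y, y \in kfirst (c + d) -> [set leaf i; y] \in G.
Hypothesis hub_nbr : forall y, [set hub; y] \in G ->
  y \in kfirst c \/ exists2 i, y = leaf i & P i || W i.
Hypothesis leafW_nbr : forall i, W i ->
  forall y, [set leaf i; y] \in G -> y = hub \/ y \in kfirst c.-1.

Lemma core_hub_le : core_number G hub <= c + #|P|.
Proof.
apply: core_number_le => U hubU.
have [/existsP[i /andP[Wi iU]] | /existsPn noW] := boolP [exists i, W i && (leaf i \in U)].
  exists (leaf i) => //; apply: leq_trans (deg_in_le_card (N := hub |: kfirst c.-1) _) _.
    by move=> z _ /(leafW_nbr Wi)[->|zK]; rewrite in_setU1 ?eqxx ?zK ?orbT.
  by apply: leq_trans (leq_card_setU _ _) _; rewrite cards1 card_kfirst; lia.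
exists hub => //; apply: leq_trans (deg_in_le_card (N := kfirst c :|: leaf @: P) _) _.
  move=> z zU /hub_nbr[zK|[i zi PWi]]; first by rewrite inE zK.
  subst z; rewrite inE imset_f ?orbT //.
  by have := noW i; rewrite zU andbT; case: (W i) PWi; rewrite ?orbF.
apply: leq_trans (leq_card_setU _ _) _.
by rewrite card_kfirst ?card_imset //; [exact: leaf_inj|lia].
Qed.

Lemma core_hub_ge : c + #|P| <= core_number G hub.
Proof.
have card_P : #|P| <= d by have := max_card (mem P); rewrite card_ord.
pose U := [set y : 'I_n | (d < y) || (y == hub) || (y \in leaf @: P)].
have bigU (y : 'I_n) : d < y -> y \in U by rewrite inE => ->.
apply: (core_number_ge (U := U)); first by rewrite inE eqxx orbT.
move=> y; rewrite inE => /orP[/orP[dy|/eqP ->]|/imsetP[i Pi ->]].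
- apply: leq_trans (card_le_deg_in (N := kfirst M :\ y) _ _).
  + have yK : y \in kfirst M by rewrite inE dy /=; have := ltn_ord y; lia.
    by have := cardsD1 y (kfirst M); rewrite yK card_kfirst //; lia.
  + by apply/subsetP => z; rewrite !inE => /andP[_ /andP[dz _]]; rewrite dz.
  + by move=> z; rewrite !inE => /andP[zy /andP[dz _]]; apply: clique; rewrite // eq_sym.
- have disj : [disjoint kfirst c & leaf @: P].
    rewrite disjoint_sym disjoint_subset.
    by apply/subsetP => _ /imsetP[i _ ->]; rewrite inE /= leaf_kfirst.
  apply: leq_trans (card_le_deg_in (N := kfirst c :|: leaf @: P) _ _).
  + have /eqP -> : #|kfirst c :|: leaf @: P| == #|kfirst c| + #|leaf @: P|.
      by rewrite (leq_card_setU _ _).2.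
    by rewrite card_kfirst ?card_imset //; [exact: leaf_inj|lia].
  + apply/subsetP => z; rewrite !inE => /orP[/andP[-> _]//|zP].
    by rewrite zP !orbT.
  + by move=> z; rewrite inE => /orP[/hub_adj //|/imsetP[i Pi ->]]; apply: hub_leafP.
- apply: leq_trans (card_le_deg_in (N := kfirst (c + d)) _ _).
  + by rewrite card_kfirst; lia.
  + by apply/subsetP => z; rewrite inE => /andP[dz _]; apply: bigU.
  + exact: leafP_adj.
Qed.

Lemma core_hub : core_number G hub = c + #|P|.
Proof. by apply/eqP; rewrite eqn_leq core_hub_le core_hub_ge. Qed.

End HubCore.

Definition level j := d.+1 * j.+1.

Lemma level_succ j : (level j.+1).-1 = level j + d.
Proof. by rewrite /level mulnS; lia. Qed.

Definition E0 : {set {set 'I_n}} :=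
  rel_graph (fun a b : 'I_n =>
    (d < a) && (d < b) || (a == hub) && (b \in kfirst (level 0))).
Definition leaf_edge i : {set 'I_n} := [set hub; leaf i].

Lemma card_leaf_edge i : #|leaf_edge i| = 2.
Proof. by rewrite cards2 hub_leaf. Qed.

Definition Sq (q : nat -> 'I_d -> bool) j : {set {set 'I_n}} :=
  rel_graph (fun a b : 'I_n =>
    [exists i, q j i && (a == leaf i)] && (b \in kfirst (level j + d))).

Definition Tq j : {set {set 'I_n}} :=
  rel_graph (fun a b : 'I_n => (a == hub) && (b \in kfirst (level j.+1))).

Section Stages.
Variables (q : nat -> 'I_d -> bool) (x : {ffun 'I_d -> bool}).
Local Notation H j := (Hgraph E0 leaf_edge (Sq q) Tq x j).
Local Notation Q j := (Qgraph E0 leaf_edge (Sq q) Tq x j).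

Definition stage_adj j (a b : 'I_n) :=
  [|| (d < a) && (d < b), (a == hub) && (b \in kfirst (level j)),
      (a == hub) && [exists i, x i && (b == leaf i)] |
      [exists i, a == leaf i] && (b \in kfirst (level j).-1)].

Lemma stage_adj_succ j a b : stage_adj j a b -> stage_adj j.+1 a b.
Proof.
have lt_level : level j < level j.+1 by rewrite /level ltn_mul2l /=.
rewrite /stage_adj !inE => /or4P[->|/andP[-> hb]|->|/andP[-> hb]]; rewrite ?orbT //.
  by apply/or4P; apply: Or42; apply/andP; split => //; lia.
by apply/or4P; apply: Or44; apply/andP; split => //; lia.
Qed.

Lemma H_adj j a b : [set a; b] \in H j -> stage_adj j a b || stage_adj j b a.
Proof.
elim: j => [|j IH] /=.
  case/setUP => [/rel_graph_set2|/imsetP[i xi e]].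
    by case/orP => /orP[] r; rewrite /stage_adj r ?orbT.
  have adj_xi : stage_adj 0 hub (leaf i).
    rewrite /stage_adj; apply/or4P; apply: Or43; rewrite eqxx /=.
    by apply/existsP; exists i; move: xi; rewrite inE => ->; rewrite eqxx.
  by case: (eq_set2 e) => [][-> ->]; rewrite adj_xi ?orbT.
case/setUP => [/setUP[/IH|/rel_graph_set2]|/rel_graph_set2].
- by case/orP => /stage_adj_succ ->; rewrite ?orbT.
- case/orP => /andP[ha hb]; apply/orP; [left|right]; apply/or4P; apply: Or44;
    rewrite level_succ hb andbT; case/existsP: ha => i /andP[_ e];
    by apply/existsP; exists i.
- by case/orP => r; rewrite /stage_adj r ?orbT.
Qed.

Lemma hub_nbr_H j y :
  [set hub; y] \in H j -> y \in kfirst (level j) \/ exists2 i, y = leaf i & x i.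
Proof.
have hub_not_leaf : [exists i, hub == leaf i] = false.
  by apply/existsP => [[i]]; rewrite hub_leaf.
have hub_not_xleaf : [exists i, x i && (hub == leaf i)] = false.
  by apply/existsP => [[i]]; rewrite hub_leaf andbF.
move/H_adj; rewrite /stage_adj !hub_kfirst eqxx hub_not_leaf hub_not_xleaf /=.
rewrite ltn0 !andbF !orbF.
by case/orP => [->|/existsP[i /andP[xi /eqP ->]]]; [left|right; exists i].
Qed.

Lemma leaf_nbr_H j i y :
  [set leaf i; y] \in H j -> y = hub \/ y \in kfirst (level j).-1.
Proof.
have leaf_i : [exists i', leaf i == leaf i'] by apply/existsP; exists i.
move/H_adj; rewrite /stage_adj !d_lt_leaf leaf_hub !leaf_kfirst leaf_i.
rewrite !andbF !andFb !orbF !orFb andTb.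
by case/orP => [->|/andP[/eqP -> _]]; [right|left].
Qed.

Lemma H0_sub j : H 0 \subset H j.
Proof.
elim: j => [//|j IH] /=; apply: (subset_trans IH).
exact: subset_trans (subsetUl _ _) (subsetUl _ _).
Qed.

Lemma clique_H j (a b : 'I_n) : d < a -> d < b -> a != b -> [set a; b] \in H j.
Proof.
move=> da db ab; apply: (subsetP (H0_sub j)); apply/setUP; left.
by apply: mem_rel_graph; rewrite ?da ?db.
Qed.

Lemma hub_kfirst_H j y : y \in kfirst (level j) -> [set hub; y] \in H j.
Proof.
move=> yK; have hy : hub != y by apply: contraTneq yK => <-; rewrite hub_kfirst.
case: j yK => [|j] yK /=; last by apply/setUP; right; apply: mem_rel_graph; rewrite ?eqxx.
by apply/setUP; left; apply: mem_rel_graph; rewrite ?yK ?eqxx ?orbT.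
Qed.

Lemma hub_leaf_H j i : x i -> [set hub; leaf i] \in H j.
Proof.
move=> xi; apply: (subsetP (H0_sub j)); apply/setUP; right.
by apply: imset_f; rewrite inE.
Qed.

Lemma Sq_set2 j a b : [set a; b] \in Sq q j ->
  exists i, [/\ q j i, a = leaf i & b \in kfirst (level j + d)]
         \/ [/\ q j i, b = leaf i & a \in kfirst (level j + d)].
Proof.
case/rel_graph_set2/orP => /andP[/existsP[i /andP[qi /eqP ->]] K].
  by exists i; left.
by exists i; right.
Qed.

Lemma leaf_kfirst_Q j i y :
  q j i -> y \in kfirst (level j + d) -> [set leaf i; y] \in Q j.
Proof.
move=> qi yK; apply/setUP; right; apply: mem_rel_graph.
  by apply: contraTneq yK => <-; rewrite leaf_kfirst.
by rewrite yK andbT; apply/existsP; exists i; rewrite qi eqxx.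
Qed.

Lemma hub_nbr_Q j y :
  [set hub; y] \in Q j -> y \in kfirst (level j) \/ exists2 i, y = leaf i & x i.
Proof.
case/setUP => [/hub_nbr_H //|/Sq_set2[i [][_ hi K]]].
  by move/eqP: (hub_leaf i); rewrite hi.
by move: K; rewrite hub_kfirst.
Qed.

Lemma leaf_nbr_Q j i y : ~~ q j i ->
  [set leaf i; y] \in Q j -> y = hub \/ y \in kfirst (level j).-1.
Proof.
move=> nqi; case/setUP => [/leaf_nbr_H //|/Sq_set2[i' [][qi' ei K]]].
  by move: qi'; rewrite -(leaf_inj ei) (negbTE nqi).
by move: K; rewrite leaf_kfirst.
Qed.

Lemma core_H j : level j + d < M -> core_number (H j) hub = level j.
Proof.
move=> lt_jM; rewrite -[level j]addn0 -(card0 'I_d).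
apply: (core_hub (W := [pred i | x i])) => //.
- exact: clique_H.
- exact: hub_kfirst_H.
- by move=> y /hub_nbr_H[yK|[i yi xi]]; [left|right; exists i].
- by move=> i _ y /leaf_nbr_H.
Qed.

Lemma core_Q j : level j + d < M ->
  core_number (Q j) hub = level j + #|[pred i | x i && q j i]|.
Proof.
move=> lt_jM; apply: (core_hub (W := [pred i | x i && ~~ q j i])) => //.
- by move=> a b da db ab; apply/setUP; left; apply: clique_H.
- by move=> y yK; apply/setUP; left; apply: hub_kfirst_H.
- by move=> i /andP[xi _]; apply/setUP; left; apply: hub_leaf_H.
- by move=> i /andP[_ qi] y; apply: leaf_kfirst_Q.
- move=> y /hub_nbr_Q[yK|[i yi xi]]; [by left|right; exists i => //].
  by rewrite /= xi; case: (q j i).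
- by move=> i /andP[_ nqi] y /(leaf_nbr_Q nqi).
Qed.

End Stages.

Lemma card_E0 : #|E0| <= n * n.
Proof.
apply: leq_trans (card_rel_graph (A := setT) (B := setT) _) _; first by move=> *; rewrite !inE.
by rewrite cardsT card_ord.
Qed.

Lemma card_Sq q j : #|Sq q j| <= d * n.
Proof.
apply: leq_trans (card_rel_graph (A := leaf @: setT) (B := setT) _) _.
  by move=> a b /andP[/existsP[i /andP[_ /eqP ->]] _]; rewrite imset_f ?inE.
by rewrite cardsT card_ord card_imset ?cardsT ?card_ord //; exact: leaf_inj.
Qed.

Lemma card_Tq j : #|Tq j| <= n.
Proof.
apply: leq_trans (card_rel_graph (A := [set hub]) (B := setT) _) _.
  by move=> a b /andP[/eqP -> _]; rewrite !inE.
by rewrite cards1 cardsT card_ord mul1n.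
Qed.

End Gadget.

Lemma inner_card d (x q : {ffun 'I_d -> bool}) : inner x q = #|[pred i | x i && q i]|.
Proof.
rewrite /inner -sum1_card [RHS]big_mkcond /=; apply: eq_bigr => i _.
by rewrite inE; case: (x i && q i).
Qed.

Definition gadget_size zeta d := d.+1 * (zeta * d).+1.
Definition gadget_order zeta d := (d + gadget_size zeta d).+1.
Definition gadget_time zeta d := 3 * gadget_order zeta d ^ 2.

Section Budget.
Variable zeta : nat.
Local Notation m d := (zeta * d).
Local Notation M d := (gadget_size zeta d).
Local Notation n d := (gadget_order zeta d).

Lemma level_lt_size d j : j < m d -> level d j + d < M d.
Proof.
move=> jm; have : d.+1 * j.+1 <= d.+1 * m d by rewrite leq_mul2l jm orbT.
by rewrite /level /gadget_size mulnS; lia.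
Qed.

Lemma gadget_order_increasing : pos_increasing (gadget_order zeta).
Proof.
split=> // d1 d2 lt_d; have : M d1 <= M d2.
  by apply: leq_mul; rewrite ?ltnS ?leq_mul2l ltnW ?orbT.
by rewrite /gadget_order; lia.
Qed.

Lemma gadget_time_increasing : pos_increasing (gadget_time zeta).
Proof.
split=> [d|d1 d2 /(gadget_order_increasing.2)]; first by rewrite /gadget_time muln_gt0 expn_gt0.
by rewrite /gadget_time ltn_pmul2l // ltn_exp2r.
Qed.

Lemma gadget_order_le d : 0 < d -> n d <= (2 * zeta + 4) * d ^ 2.
Proof. by move=> d_gt0; rewrite /gadget_order /gadget_size; nia. Qed.

Lemma gadget_order_bigO : bigO (gadget_order zeta) (fun d => d ^ 2).
Proof. by exists (2 * zeta + 4), 1 => d; apply: gadget_order_le. Qed.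

Lemma gadget_time_bigO : bigO (gadget_time zeta) (fun d => d ^ 4).
Proof.
exists (3 * (2 * zeta + 4) ^ 2), 1 => d d_gt0.
rewrite /gadget_time -mulnA leq_mul2l /= (_ : 4 = 2 * 2) // expnM -expnMn.
by rewrite leq_exp2r // gadget_order_le.
Qed.

Lemma gadget_budget d (q : nat -> 'I_d -> bool) :
  #|E0 d (M d)| + d + \sum_(j < m d) (#|@Sq d (M d) q j| + #|Tq d (M d) j|) <= gadget_time zeta d.
Proof.
have sum_le : \sum_(j < m d) (#|@Sq d (M d) q j| + #|Tq d (M d) j|) <= m d * (d.+1 * n d).
  apply: leq_trans (_ : \sum_(j < m d) d.+1 * n d <= _); last by rewrite sum_nat_const card_ord.
  by apply: leq_sum => j _; rewrite mulSn addnC leq_add ?card_Sq ?card_Tq.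
have queries_le : m d * (d.+1 * n d) <= n d * n d.
  rewrite mulnA leq_mul2r; apply/orP; right.
  apply: (@leq_trans (M d)); first by rewrite mulnC leq_mul2l leqnSn orbT.
  by rewrite /gadget_order; lia.
have d_le : d <= n d * n d.
  have d_lt : d < n d by rewrite /gadget_order; lia.
  by apply: leq_trans (ltnW d_lt) (leq_pmulr _ _).
have E0_le : #|E0 d (M d)| <= n d * n d := card_E0 d (M d).
by rewrite /gadget_time expnS expn1; lia.
Qed.

End Budget.

Theorem mainTheorem4 :
  forall zeta : nat,
  exists vf tf : nat -> nat,
    core_AND_gadget zeta vf tf /\
    bigO vf (fun d => d ^ 2) /\ bigO tf (fun d => d ^ 4).
Proof.
move=> zeta; exists (gadget_order zeta), (gadget_time zeta).
split; last by split; [apply: gadget_order_bigO|apply: gadget_time_bigO].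
split; first exact: gadget_order_increasing.
split=> [|d]; first exact: gadget_time_increasing.
exists (E0 d (gadget_size zeta d)), (hub d _), (@leaf_edge d (gadget_size zeta d)).
split; first exact: edge_set_rel_graph.
split=> [|q]; first exact: card_leaf_edge.
pose qn j i := if insub j is Some j' then q j' i else false.
exists (Sq _ qn), (Tq d _), (fun _ a => INR a).
split; first by split; apply: edge_set_rel_graph.
split; first by move=> *; apply: Rle_refl.
split=> [x j|]; last exact: gadget_budget.
have lt_jM := level_lt_size (ltn_ord j).
rewrite core_Q // core_H // plus_INR inner_card /qn valK.
by rewrite /Rminus Rplus_comm -Rplus_assoc Rplus_opp_l Rplus_0_l.
Qed.
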